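(* Let $T$ be a Huffman code tree for $p$ (average length $L_H$), with $P_R\ge 1/2$ its larger root-subtree probability. Then for every $N\ge2$, $\min\{L_H,L^{(\mathrm I)}_N\}=L_H-\delta^{(\mathrm I)}_N(P_R)$ and $\min\{L_H,L^{(\mathrm{II})}\}=L_H-\delta^{(\mathrm{II})}(P_R)$, where $L^{(\mathrm I)}_N$, $L^{(\mathrm{II})}$ are the average code lengths of the Type-I AEDS with $N$ states and the Type-II AEDS built on $T$, and $\delta^{(\mathrm I)}_N(P)=\left[\frac{1-P^{N-1}}{1-P^{N}}P+\frac{1-P^{2^k-N}}{1-P^{N}}(1-P)-k(1-P)\right]_0$ with $k=\lceil\lg N\rceil$, $\delta^{(\mathrm{II})}(P)=\left[\frac{P^3-P^2+2P-1}{(2-P)(1+P+P^2)}\right]_0$, $[u]_0=\max\{u,0\}$. Consequently, if $P_R>(\sqrt5-1)/2\approx0.6180$ then $L^{(\mathrm I)}_2<L_H$, and if $P_R>\omega^{(\mathrm{II})}\approx0.56984$ (the real root of $P^3-P^2+2P-1=0$) then $L^{(\mathrm{II})}<L_H$.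
   Context: Let $\mathcal S$ be a finite alphabet with $|\mathcal S|\ge 2$ and $p=\{p(s)\}$ a probability distribution with $p(s)>0$ (i.i.d. source). $\mathcal B=\{0,1\}^*$, $l(\beta)$ the length of $\beta$, $\lg=\log_2$. An AEDS with finite state set $\mathcal X$ consists of maps $E_{\hat x}:\mathcal S\to\mathcal B$, $F^-_{\hat x}:\mathcal S\to\mathcal X$ ($\hat x\in\mathcal X$) such that for every $x$ the words $E_{\hat x}(s)$ over pairs with $F^-_{\hat x}(s)=x$ are distinct and prefix-free. The state chain moves from $\hat x$ to $F^-_{\hat x}(s)$ with probability $p(s)$; with its stationary distribution $Q$, the average code length is $L=\sum_{\hat x}\sum_s p(s)Q(\hat x)l(E_{\hat x}(s))$. For a code tree $T$ (prefix-free code, codeword $c_T(s)$ of length $l_T(s)\ge1$): $\mathcal S_R,\mathcal S_L$ are the symbols in the right/left root subtree (both nonempty), $P_R=\sum_{\mathcal S_R}p(s)\ge1/2$; $t_R(s)$, $t_L(s)$ denote $c_T(s)$ with its first bit removed. The Huffman code tree is any tree of an optimal (Huffman) prefix code; $L_H$ its average length. Type-I AEDS with $N\ge2$ states $\alpha_1..\alpha_N$ on $T$: with $k=\lceil\lg N\rceil$ and a prefix-free set $\pi_1..\pi_N$ with $l(\pi_j)=k-1$ for $j\le 2^k-N$ and $k$ otherwise: for $s\in\mathcal S_R$, $F^-_{\alpha_j}(s)=\alpha_{j+1}$, $E_{\alpha_j}(s)=t_R(s)$ ($j<N$), $F^-_{\alpha_N}(s)=\alpha_1$, $E_{\alpha_N}(s)=0t_R(s)$;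 for $s\in\mathcal S_L$, $F^-_{\alpha_j}(s)=\alpha_1$, $E_{\alpha_j}(s)=1\pi_jt_L(s)$. Type-II AEDS with states $\alpha_1..\alpha_5$ on $T$ (pairs $(F^-(s),E(s))$): $\alpha_1$: $\mathcal S_R\mapsto(\alpha_3,0t_R)$, $\mathcal S_L\mapsto(\alpha_2,t_L)$; $\alpha_2$: $\mathcal S_R\mapsto(\alpha_3,10t_R)$, $\mathcal S_L\mapsto(\alpha_1,111t_L)$; $\alpha_3$: $\mathcal S_R\mapsto(\alpha_4,t_R)$, $\mathcal S_L\mapsto(\alpha_1,0t_L)$; $\alpha_4$: $\mathcal S_R\mapsto(\alpha_5,t_R)$, $\mathcal S_L\mapsto(\alpha_1,10t_L)$; $\alpha_5$: $\mathcal S_R\mapsto(\alpha_3,11t_R)$, $\mathcal S_L\mapsto(\alpha_1,110t_L)$. *)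

From HB Require Import structures.
From mathcomp Require Import all_boot all_order all_algebra.
Set Implicit Arguments. Unset Strict Implicit. Unset Printing Implicit Defensive.
Import Order.TTheory GRing.Theory Num.Theory.
Local Open Scope ring_scope.

Section Defs.
Variable R : rcfType.
Variable S : finType.
Variable p : S -> R.

Definition prefix_free (X : finType) (f : X -> seq bool) : Prop :=
  forall x y : X, x != y -> ~~ prefix (f x) (f y).

Definition avg_len (c : S -> seq bool) : R := \sum_(s : S) p s * (size (c s))%:R.

Definition code_tree (c : S -> seq bool) : Prop :=
  prefix_free c /\ (forall s, (0 < size (c s))%N).

Definition huffman_tree (c : S -> seq bool) : Prop :=
  code_tree c /\ forall c' : S -> seq bool, prefix_free c' -> avg_len c <= avg_len c'.

(* symbols in the root subtree entered by bit b *)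
Definition in_sub (c : S -> seq bool) (b : bool) (s : S) : bool := ohead (c s) == Some b.

Definition Psub (c : S -> seq bool) (b : bool) : R := \sum_(s | in_sub c b s) p s.

Definition trans (X : finType) (F : X -> S -> X) (x y : X) : R :=
  \sum_(s | F x s == y) p s.

Definition stationary (X : finType) (F : X -> S -> X) (Q : X -> R) : Prop :=
  [/\ forall x, 0 <= Q x, \sum_(x : X) Q x = 1
    & forall y, Q y = \sum_(x : X) Q x * trans F x y].

Definition aeds_len (X : finType) (E : X -> S -> seq bool) (Q : X -> R) : R :=
  \sum_(x : X) \sum_(s : S) p s * Q x * (size (E x s))%:R.
End Defs.

(* ---------- Type-I AEDS with N states (alpha_{j+1} is index j) ---------- *)
Definition ord0_of (N : nat) (i : 'I_N) : 'I_N :=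
  Ordinal (leq_ltn_trans (leq0n i) (ltn_ord i)).

Definition kI (N : nat) : nat := up_log 2 N.  (* = ceil (lg N) for N >= 2 *)

Definition valid_pi (N : nat) (pi : 'I_N -> seq bool) : Prop :=
  prefix_free pi /\
  forall j : 'I_N, size (pi j) = if (j < 2 ^ kI N - N)%N then (kI N).-1 else kI N.

Definition typeI_F (S : finType) (c : S -> seq bool) (bR : bool) (N : nat)
    (i : 'I_N) (s : S) : 'I_N :=
  if in_sub c bR s then insubd (ord0_of i) i.+1 else ord0_of i.

Definition typeI_E (S : finType) (c : S -> seq bool) (bR : bool) (N : nat)
    (pi : 'I_N -> seq bool) (i : 'I_N) (s : S) : seq bool :=
  if in_sub c bR s then
    (if (i.+1 < N)%N then behead (c s) else false :: behead (c s))
  else true :: pi i ++ behead (c s).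

(* ---------- Type-II AEDS with 5 states (alpha_{j+1} is index j) ---------- *)
Definition typeII_F (S : finType) (c : S -> seq bool) (bR : bool)
    (i : 'I_5) (s : S) : 'I_5 :=
  if in_sub c bR s then
    match val i with 0 => inord 2 | 1 => inord 2 | 2 => inord 3 | 3 => inord 4 | _ => inord 2 end
  else
    match val i with 0 => inord 1 | _ => inord 0 end.

Definition typeII_E (S : finType) (c : S -> seq bool) (bR : bool)
    (i : 'I_5) (s : S) : seq bool :=
  if in_sub c bR s then
    match val i with
    | 0 => false :: behead (c s)
    | 1 => [:: true; false] ++ behead (c s)
    | 2 => behead (c s)
    | 3 => behead (c s)
    | _ => [:: true; true] ++ behead (c s)
    end
  else
    match val i with
    | 0 => behead (c s)
    | 1 => [:: true; true; true] ++ behead (c s)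
    | 2 => false :: behead (c s)
    | 3 => [:: true; false] ++ behead (c s)
    | _ => [:: true; true; false] ++ behead (c s)
    end.

Definition pos0 (R : realDomainType) (u : R) : R := Num.max u 0.

Definition deltaI (R : rcfType) (N : nat) (P : R) : R :=
  let k := kI N in
  pos0 ((1 - P ^+ N.-1) / (1 - P ^+ N) * P
        + (1 - P ^+ (2 ^ k - N)) / (1 - P ^+ N) * (1 - P)
        - k%:R * (1 - P)).

Definition deltaII (R : rcfType) (P : R) : R :=
  pos0 ((P ^+ 3 - P ^+ 2 + 2 * P - 1) / ((2 - P) * (1 + P + P ^+ 2))).

From HB Require Import structures.
From mathcomp Require Import all_boot all_order all_algebra.
From mathcomp Require Import ring lra zify.
Import Order.TTheory GRing.Theory Num.Theory.
Local Open Scope ring_scope.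

(* Both schemes emit, for a symbol s in state x, the codeword of s with its
   root bit replaced by a prefix whose length depends only on x and on whether
   s lies in the root subtree of probability P; hence
   L = L_H - 1 + sum_x Q(x) (P a(x) + (1 - P) b(x)), and the state chain is a
   Markov chain driven by a P-coin.  Its stationary law is unique and explicit:
   geometric, Q(alpha_j) ~ P^(j-1), for Type I, and a rational function of P on
   five states for Type II.  Substituting gives L = L_H - gain(P), so
   min(L_H, L) = L_H - [gain(P)]_0.  A Huffman tree has symbols in both root
   subtrees, so 0 < P < 1.  For N = 2 the gain has the sign of P^2 + P - 1, and
   for Type II that of the cubic P^3 - P^2 + 2P - 1, which is strictly
   increasing; this yields the two thresholds. *)

Section RootSplit.
Context {R : rcfType} {S : finType}.
Variables (p : S -> R) (c : S -> seq bool) (bR : bool).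
Hypothesis sum_p : \sum_(s : S) p s = 1.
Local Notation P := (Psub p c bR).

Lemma Psub_compl : \sum_(s | ~~ in_sub c bR s) p s = 1 - P.
Proof. by rewrite -sum_p (bigID (in_sub c bR) predT) /= /Psub addrC addrK. Qed.

Lemma sum_in_sub (u v : R) :
  \sum_(s : S) p s * (if in_sub c bR s then u else v) = P * u + (1 - P) * v.
Proof.
rewrite (bigID (in_sub c bR)) /= -Psub_compl /Psub !big_distrl /=.
by congr (_ + _); apply: eq_bigr => s; [move=> -> | move/negbTE ->].
Qed.

Lemma inflow_in_sub (X : finType) (F : X -> S -> X) (g h : X -> X) (Q : X -> R) y :
  (forall x s, F x s = if in_sub c bR s then g x else h x) ->
  \sum_(x : X) Q x * trans p F x y
  = P * \sum_(x | g x == y) Q x + (1 - P) * \sum_(x | h x == y) Q x.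
Proof.
move=> eF; rewrite (big_mkcond (fun x => g x == y)) (big_mkcond (fun x => h x == y)).
rewrite !big_distrr -big_split /=.
apply: eq_bigr => x _; rewrite /trans -sum_in_sub big_distrr big_mkcond /=.
apply: eq_bigr => s _; rewrite eF.
by case: in_sub; case: eqP => _; rewrite ?mulr0 // mulrC.
Qed.

Lemma aeds_len_root_prefix (X : finType) (E : X -> S -> seq bool) (a b : X -> nat)
    (Q : X -> R) :
  (forall s, (0 < size (c s))%N) ->
  (forall x s, size (E x s) =
     (size (behead (c s)) + if in_sub c bR s then a x else b x)%N) ->
  \sum_(x : X) Q x = 1 ->
  aeds_len p E Q
  = avg_len p c - 1 + \sum_(x : X) Q x * (P * (a x)%:R + (1 - P) * (b x)%:R).
Proof.
move=> c_gt0 eE sum_Q.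
have avg_behead : avg_len p c - 1 = \sum_(s : S) p s * (size (behead (c s)))%:R.
  rewrite /avg_len -[X in _ - X]sum_p -sumrB; apply: eq_bigr => s _.
  by rewrite size_behead -subn1 natrB ?c_gt0 // mulrBr mulr1.
rewrite -[avg_len p c - 1]mul1r -{1}sum_Q big_distrl -big_split /=.
apply: eq_bigr => x _; rewrite avg_behead -sum_in_sub !big_distrr -big_split /=.
apply: eq_bigr => s _; rewrite eE natrD.
by case: in_sub; ring.
Qed.

End RootSplit.

(* A tree all of whose codewords begin with the same bit is not optimal:
   deleting that bit keeps it prefix-free and shortens every codeword. *)
Lemma huffman_tree_off_sub {R : rcfType} {S : finType} (p : S -> R)
    (c : S -> seq bool) (bR : bool) :
  (0 < #|S|)%N -> (forall s, 0 < p s) -> huffman_tree p c ->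
  exists s, ~~ in_sub c bR s.
Proof.
move=> S_gt0 p_gt0 [[pf_c _] opt_c].
have [/existsP //|/existsPn all_sub] := boolP [exists s, ~~ in_sub c bR s].
exfalso.
have ec s : c s = bR :: behead (c s).
  by have := all_sub s; rewrite negbK /in_sub; case: (c s) => //= b t /eqP [->].
have pf_behead : prefix_free (fun s => behead (c s)).
  by move=> x y xy; have := pf_c x y xy; rewrite (ec x) (ec y) prefix_cons eqxx.
have avg_c : avg_len p c = avg_len p (fun s => behead (c s)) + \sum_s p s.
  rewrite /avg_len -big_split /=; apply: eq_bigr => s _.
  by rewrite {1}(ec s) /= -addn1 natrD mulrDr mulr1.
have [s0 _] := card_gt0P S_gt0.
have sum_gt0 : 0 < \sum_s p s.
  by rewrite (bigD1 s0) //= ltr_pwDl // sumr_ge0 // => s _; exact: ltW.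
by have := opt_c _ pf_behead; rewrite avg_c gerDl leNgt sum_gt0.
Qed.

Lemma Psub_lt1 {R : rcfType} {S : finType} (p : S -> R) (c : S -> seq bool) bR :
  (0 < #|S|)%N -> (forall s, 0 < p s) -> \sum_s p s = 1 -> huffman_tree p c ->
  Psub p c bR < 1.
Proof.
move=> S_gt0 p_gt0 sum_p huff.
have [s0 off_s0] := huffman_tree_off_sub p c bR S_gt0 p_gt0 huff.
rewrite -subr_gt0 -(Psub_compl p c bR sum_p) (bigD1 s0) //= ltr_pwDl //.
by rewrite sumr_ge0 // => s _; exact: ltW.
Qed.

Lemma min_subr_pos0 {R : realDomainType} (a d : R) : Num.min a (a - d) = a - pos0 d.
Proof.
by rewrite /pos0 minEle maxEle; case: (lerP a (a - d)); case: (lerP d 0); lra.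
Qed.

Lemma geometric_sum {R : comPzRingType} (x : R) m :
  (1 - x) * \sum_(i < m) x ^+ i = 1 - x ^+ m.
Proof. by rewrite -opprB mulNr -subrX1 opprB. Qed.

Lemma kI_bounds N : (1 < N)%N -> (0 < kI N)%N /\ (2 ^ kI N - N <= N)%N.
Proof.
move=> N_gt1; have k_gt0 : (0 < kI N)%N by rewrite /kI up_log_gt0.
split=> //; have := up_log_gtn (isT : (1 < 2)%N) N_gt1.
have e : (2 ^ kI N = 2 * 2 ^ (kI N).-1)%N by rewrite -expnS prednK.
by rewrite /kI in e k_gt0 *; lia.
Qed.

Definition gainI {R : rcfType} (N : nat) (P : R) : R :=
  (1 - P ^+ N.-1) / (1 - P ^+ N) * P
  + (1 - P ^+ (2 ^ kI N - N)) / (1 - P ^+ N) * (1 - P)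
  - (kI N)%:R * (1 - P).

Section TypeI.
Context {R : rcfType} {S : finType}.
Variables (p : S -> R) (c : S -> seq bool) (bR : bool) (n : nat).
Hypothesis sum_p : \sum_(s : S) p s = 1.
Local Notation P := (Psub p c bR).
Local Notation F := (typeI_F c bR (N := n.+1)).

Definition prevI (y : 'I_n.+1) : 'I_n.+1 :=
  inord (if nat_of_ord y == 0%N then n else (nat_of_ord y).-1).

Lemma succI_eq (x y : 'I_n.+1) : (insubd (ord0_of x) x.+1 == y) = (x == prevI y).
Proof.
rewrite -val_eqE val_insubd -val_eqE /= inordK; last first.
  by have := ltn_ord y; case: ifP => _; lia.
by case: x y => [u ?] [[|v] ?] /=; case: ltnP => ?; apply/eqP/eqP; lia.
Qed.

Lemma typeI_inflow (Q : 'I_n.+1 -> R) y :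
  \sum_x Q x * trans p F x y
  = P * Q (prevI y) + (1 - P) * (if nat_of_ord y == 0%N then \sum_x Q x else 0).
Proof.
rewrite (inflow_in_sub p c bR sum_p _ _ (fun x => insubd (ord0_of x) x.+1)
  (@ord0_of _)) //.
rewrite (big_pred1 (prevI y)) => [|x]; last exact: succI_eq.
rewrite (eq_bigl (fun=> nat_of_ord y == 0%N)) => [|x]; last by rewrite -val_eqE eq_sym.
by case: (nat_of_ord y == 0%N); rewrite ?big_pred0_eq.
Qed.

Lemma val_prevI (y : 'I_n.+1) :
  val (prevI y) = if nat_of_ord y == 0%N then n else (nat_of_ord y).-1.
Proof. by rewrite /= inordK //; have := ltn_ord y; case: ifP => _; lia. Qed.

Hypotheses (P_gt0 : 0 < P) (P_lt1 : P < 1).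

Definition qI (j : nat) : R := P ^+ j * (1 - P) / (1 - P ^+ n.+1).

Lemma denI_gt0 : 0 < 1 - P ^+ n.+1.
Proof. by rewrite subr_gt0 exprn_ilt1 // ltW. Qed.

Lemma denI_neq0 : 1 - P ^+ n.+1 != 0.
Proof. by rewrite gt_eqF // denI_gt0. Qed.

Lemma sum_qI_lt m : (m <= n.+1)%N ->
  \sum_(x : 'I_n.+1 | (x < m)%N) qI x = (1 - P ^+ m) / (1 - P ^+ n.+1).
Proof.
move=> le_mn; rewrite -(big_ord_widen _ qI le_mn) -geometric_sum.
by rewrite /qI -!big_distrl /= [X in X / _]mulrC.
Qed.

Lemma sum_qI : \sum_(x : 'I_n.+1) qI x = 1.
Proof.
rewrite -(eq_bigl _ _ (fun x => ltn_ord x)) sum_qI_lt //.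
by rewrite divff // denI_neq0.
Qed.

Lemma typeI_stationary_qI : stationary p F (fun x => qI x).
Proof.
split=> [x||y]; last 1 first.
- rewrite typeI_inflow sum_qI val_prevI /qI.
  case: y => [[|j] lt_jn] /=; last by rewrite mulr0 addr0 exprS !mulrA.
  by have := denI_neq0; rewrite exprS => ?; field.
- rewrite /qI divr_ge0 ?(ltW denI_gt0) // mulr_ge0 ?subr_ge0 ?ltW //.
  exact: exprn_gt0.
- exact: sum_qI.
Qed.

Lemma typeI_stationary_unique Q : stationary p F Q -> forall x : 'I_n.+1, Q x = qI x.
Proof.
case=> _ sum_Q balance.
have Q_succ j : (j < n)%N -> Q (inord j.+1) = P * Q (inord j).
  move=> lt_jn; rewrite {1}balance typeI_inflow inordK //= mulr0 addr0.
  by rewrite /prevI inordK.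
have Q_exp j : (j <= n)%N -> Q (inord j) = P ^+ j * Q (inord 0).
  elim: j => [|j IHj] le_jn; first by rewrite mul1r.
  by rewrite Q_succ // IHj 1?ltnW // exprS mulrA.
have Q_val x : Q x = P ^+ x * Q (inord 0) by rewrite -Q_exp ?inord_val // -ltnS.
have sum_exp : (\sum_(i < n.+1) P ^+ i) * Q (inord 0) = 1.
  by rewrite -sum_Q big_distrl; apply: eq_bigr => x _; rewrite [RHS]Q_val.
have Q0 : (1 - P ^+ n.+1) * Q (inord 0) = 1 - P.
  by rewrite -geometric_sum -mulrA sum_exp mulr1.
by move=> x; rewrite Q_val /qI -Q0; field; exact: denI_neq0.
Qed.

Lemma typeI_E_size (pi : 'I_n.+1 -> seq bool) x s :
  size (typeI_E c bR pi x s) = (size (behead (c s))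
    + if in_sub c bR s then (nat_of_ord x == n : nat) else (size (pi x)).+1)%N.
Proof.
rewrite /typeI_E; case: in_sub => /=; last by rewrite size_cat; lia.
by have := ltn_ord x; case: ifP => /= lt_x; case: eqP; lia.
Qed.

Lemma typeI_aeds_len pi Q : (0 < n)%N -> valid_pi pi ->
  (forall s, (0 < size (c s))%N) -> stationary p F Q ->
  aeds_len p (typeI_E c bR pi) Q = avg_len p c - gainI n.+1 P.
Proof.
move=> n_gt0 [_ size_pi] c_gt0 st; have Q_qI := typeI_stationary_unique Q st.
case: st => _ sum_Q _.
rewrite (aeds_len_root_prefix p c bR sum_p _ _ _ _ Q c_gt0 (typeI_E_size pi) sum_Q).
have [k_gt0 m_le] := kI_bounds n.+1 n_gt0.
set k := kI n.+1 in k_gt0 m_le size_pi *; set m := (2 ^ k - n.+1)%N in m_le size_pi *.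
have gain x : Q x * (P * (nat_of_ord x == n)%:R + (1 - P) * (size (pi x)).+1%:R)
    = P * (if nat_of_ord x == n then qI x else 0) + (1 - P) * k.+1%:R * qI x
      - (1 - P) * (if (x < m)%N then qI x else 0).
  rewrite Q_qI size_pi.
  by case: ifP => _; rewrite ?(prednK k_gt0); case: (nat_of_ord x == n) => /=; ring.
rewrite (eq_bigr _ (fun x _ => gain x)) sumrB big_split /= -!big_distrr /=.
rewrite -!big_mkcond sum_qI_lt // sum_qI (big_pred1 ord_max) => [|x]; last first.
  by rewrite /= -val_eqE.
rewrite /gainI -/k -/m /qI /=; have := denI_neq0; rewrite !exprS => ?.
by field.
Qed.

End TypeI.

Definition gainII {R : rcfType} (P : R) : R :=
  (P ^+ 3 - P ^+ 2 + 2 * P - 1) / ((2 - P) * (1 + P + P ^+ 2)).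

Definition nextII_R (i : nat) : nat :=
  match i with 0 => 2 | 1 => 2 | 2 => 3 | 3 => 4 | _ => 2 end.
Definition nextII_L (i : nat) : nat := if i is 0 then 1 else 0.

Lemma sum_inord {R : nmodType} n (F : 'I_n.+1 -> R) :
  \sum_(x : 'I_n.+1) F x = \sum_(i < n.+1) F (inord i).
Proof. by apply: eq_bigr => x _; rewrite inord_val. Qed.

Lemma sum_ord5_inord {R : nmodType} (Q : 'I_5 -> R) :
  \sum_x Q x = Q (inord 0) + Q (inord 1) + Q (inord 2) + Q (inord 3) + Q (inord 4).
Proof. by rewrite sum_inord !big_ord_recl big_ord0 /= /bump /= !add1n addr0 !addrA. Qed.

Section TypeII.
Context {R : rcfType} {S : finType}.
Variables (p : S -> R) (c : S -> seq bool) (bR : bool).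
Hypothesis sum_p : \sum_(s : S) p s = 1.
Local Notation P := (Psub p c bR).
Local Notation F := (typeII_F c bR).

Lemma typeII_inflow (Q : 'I_5 -> R) j : (j < 5)%N ->
  \sum_x Q x * trans p F x (inord j)
  = \sum_(i < 5)
      Q (inord i) * (P * (nextII_R i == j)%:R + (1 - P) * (nextII_L i == j)%:R).
Proof.
move=> lt_j5; rewrite (inflow_in_sub p c bR sum_p _ _
  (fun x : 'I_5 => inord (nextII_R x)) (fun x : 'I_5 => inord (nextII_L x))) => [|x s];
  last first.
  by rewrite /typeII_F; case: in_sub; case: x => [[|[|[|[|[|x]]]]] ?].
have inord_next (f : nat -> nat) : (forall i, f i < 5)%N ->
    \sum_(x : 'I_5 | inord (f x) == inord j :> 'I_5) Q x
    = \sum_(i < 5) Q (inord i) * (f i == j)%:R.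
  move=> f_lt5; rewrite big_mkcond; apply: eq_bigr => x _.
  by rewrite -val_eqE /= !inordK // inord_val; case: eqP; rewrite ?mulr1 ?mulr0.
rewrite !inord_next; last 2 first.
- by case=> [|[|[|[|[|i]]]]].
- by case=> [|[|[|[|[|i]]]]].
by rewrite !big_distrr -big_split; apply: eq_bigr => i _ /=; ring.
Qed.

Local Notation q Q i := (Q (inord i : 'I_5)).

Lemma typeII_balanceP (Q : 'I_5 -> R) :
  (forall y, Q y = \sum_x Q x * trans p F x y) <->
  [/\ q Q 0 = (1 - P) * (q Q 1 + q Q 2 + q Q 3 + q Q 4), q Q 1 = (1 - P) * q Q 0,
      q Q 2 = P * (q Q 0 + q Q 1 + q Q 4), q Q 3 = P * q Q 2 & q Q 4 = P * q Q 3].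
Proof.
split=> [balance | [e0 e1 e2 e3 e4] y].
  by split; rewrite {1}balance typeII_inflow // !big_ord_recl big_ord0 /= /bump /=
    !add1n; ring.
rewrite -(inord_val y) typeII_inflow // !big_ord_recl big_ord0 /= /bump /= !add1n.
by case: y => [[|[|[|[|[|y]]]]] ?] //=; [rewrite [LHS]e0 | rewrite [LHS]e1
  | rewrite [LHS]e2 | rewrite [LHS]e3 | rewrite [LHS]e4]; ring.
Qed.
Hypotheses (P_gt0 : 0 < P) (P_lt1 : P < 1).

Definition qII (i : nat) : R :=
  match i with
  | 0 => (1 - P) / (2 - P)
  | 1 => (1 - P) ^+ 2 / (2 - P)
  | 2 => P / (1 + P + P ^+ 2)
  | 3 => P ^+ 2 / (1 + P + P ^+ 2)
  | _ => P ^+ 3 / (1 + P + P ^+ 2)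
  end.

Lemma subr2_gt0 : 0 < 2 - P.
Proof. by move: P_lt1; lra. Qed.

Lemma cyclo3_gt0 : 0 < 1 + P + P ^+ 2.
Proof. by move: P_gt0 (sqr_ge0 P); lra. Qed.

Lemma typeII_stationary_qII : stationary p F (fun x => qII x).
Proof.
have [nz2 nzC] := (lt0r_neq0 subr2_gt0, lt0r_neq0 cyclo3_gt0).
split=> [[[|[|[|[|[|i]]]]] ?]||] //=.
1-5: have P_ge0 := ltW P_gt0; have P1_ge0 : 0 <= 1 - P by rewrite subr_ge0 ltW.
1-5: by rewrite divr_ge0 ?exprn_ge0 ?sqr_ge0 ?(ltW subr2_gt0) ?(ltW cyclo3_gt0).
- by rewrite sum_ord5_inord !inordK //=; field; rewrite nz2 nzC.
- by apply/typeII_balanceP; rewrite !inordK //=; split; field; rewrite ?nz2 ?nzC.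
Qed.

Lemma typeII_stationary_unique Q :
  stationary p F Q -> forall i, (i < 5)%N -> Q (inord i) = qII i.
Proof.
case=> _ + /typeII_balanceP [e0 e1 e2 e3 e4]; rewrite sum_ord5_inord => sum_Q.
(* [Q0] uses [e0] and the normalisation; [Q2] uses [e1]-[e4] and cancels [1 - P]. *)
have Q0 : (2 - P) * q Q 0 = 1 - P by nra.
have Q2 : (1 + P + P ^+ 2) * q Q 2 = P by nra.
have [nz2 nzC] := (lt0r_neq0 subr2_gt0, lt0r_neq0 cyclo3_gt0).
have q0E : q Q 0 = (1 - P) / (2 - P) by rewrite -Q0 mulrC mulKf.
have q2E : q Q 2 = P / (1 + P + P ^+ 2) by rewrite -{1}Q2 mulrC mulKf.
by case=> [|[|[|[|[|i]]]]] //= _; rewrite ?e4 ?e3 ?e1 ?q0E ?q2E //; field.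
Qed.

Definition prefII_R (i : nat) : nat :=
  match i with 0 => 1 | 1 => 2 | 2 => 0 | 3 => 0 | _ => 2 end.
Definition prefII_L (i : nat) : nat :=
  match i with 0 => 0 | 1 => 3 | 2 => 1 | 3 => 2 | _ => 3 end.

Lemma typeII_E_size x s : size (typeII_E c bR x s) =
  (size (behead (c s)) + if in_sub c bR s then prefII_R x else prefII_L x)%N.
Proof.
rewrite /typeII_E; case: in_sub; case: x => [[|[|[|[|[|x]]]]] ?] //=;
  by rewrite ?size_cat /= ?addn0 // addnC.
Qed.

Lemma typeII_aeds_len Q : (forall s, (0 < size (c s))%N) -> stationary p F Q ->
  aeds_len p (typeII_E c bR) Q = avg_len p c - gainII P.
Proof.
move=> c_gt0 st; have Q_qII := typeII_stationary_unique Q st; case: st => _ sum_Q _.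
rewrite (aeds_len_root_prefix p c bR sum_p _ _ _ _ Q c_gt0 typeII_E_size sum_Q).
rewrite sum_ord5_inord !inordK //= !Q_qII // /gainII /=.
have [nz2 nzC] := (lt0r_neq0 subr2_gt0, lt0r_neq0 cyclo3_gt0).
by field; rewrite nz2 nzC.
Qed.

End TypeII.

Lemma gainI2_gt0 {R : rcfType} (P : R) : 0 < P -> P < 1 ->
  (Num.sqrt 5 - 1) / 2 < P -> 0 < gainI 2 P.
Proof.
move=> P_gt0 P_lt1 golden_lt.
have gainI2E : gainI 2 P = (P ^+ 2 + P - 1) / (1 + P).
  have k2 : kI 2 = 1%N by rewrite /kI up_lognn.
  rewrite /gainI k2 subnn expr0 subrr !mul0r addr0.
  have [nz1 nz2] : 1 - P ^+ 2 != 0 /\ 1 + P != 0.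
    by split; rewrite gt_eqF // ?subr_gt0 ?exprn_ilt1 ?ltW //; lra.
  by field; rewrite nz1 nz2.
rewrite gainI2E divr_gt0 //; last by lra.
have sqrt5_ge0 := sqrtr_ge0 (5 : R).
have sqrt5_sqr : Num.sqrt (5 : R) ^+ 2 = 5 by rewrite sqr_sqrtr // ler0n.
(* [2 P + 1 > sqrt 5 >= 0], so [4 (P ^+ 2 + P - 1) = (2 P + 1) ^+ 2 - 5 > 0]. *)
nra.
Qed.

Lemma cubicII_lt {R : rcfType} (w P : R) :
  w < P -> w ^+ 3 - w ^+ 2 + 2 * w - 1 < P ^+ 3 - P ^+ 2 + 2 * P - 1.
Proof.
move=> lt_wP; rewrite -subr_gt0.
have -> : P ^+ 3 - P ^+ 2 + 2 * P - 1 - (w ^+ 3 - w ^+ 2 + 2 * w - 1)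
    = (P - w) * ((P + w / 2 - 1 / 2) ^+ 2 + 3 / 4 * (w - 1 / 3) ^+ 2 + 5 / 3).
  by field.
rewrite mulr_gt0 ?subr_gt0 //.
by move: (sqr_ge0 (P + w / 2 - 1 / 2)) (sqr_ge0 (w - 1 / 3)); lra.
Qed.

Lemma gainII_gt0 {R : rcfType} (w P : R) : 0 < P -> P < 1 ->
  w ^+ 3 - w ^+ 2 + 2 * w - 1 = 0 -> w < P -> 0 < gainII P.
Proof.
move=> P_gt0 P_lt1 w_root lt_wP; rewrite divr_gt0 //.
  by rewrite -w_root cubicII_lt.
by rewrite mulr_gt0 //; have := sqr_ge0 P; lra.
Qed.

Theorem corollary1 (R : rcfType) (S : finType) (p : S -> R) (c : S -> seq bool)
    (bR : bool) :
  (1 < #|S|)%N ->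
  (forall s, 0 < p s) -> \sum_(s : S) p s = 1 ->
  huffman_tree p c ->
  1 / 2 <= Psub p c bR ->
  [/\ (forall (N : nat) (pi : 'I_N -> seq bool), (2 <= N)%N -> valid_pi pi ->
         (exists Q, stationary p (typeI_F c bR (N:=N)) Q) /\
         (forall Q, stationary p (typeI_F c bR (N:=N)) Q ->
            Num.min (avg_len p c) (aeds_len p (typeI_E c bR pi) Q)
            = avg_len p c - deltaI N (Psub p c bR))),
      (exists Q, stationary p (typeII_F c bR) Q) /\
      (forall Q, stationary p (typeII_F c bR) Q ->
         Num.min (avg_len p c) (aeds_len p (typeII_E c bR) Q)
         = avg_len p c - deltaII (Psub p c bR)),
      (forall pi : 'I_2 -> seq bool, valid_pi pi ->
         (Num.sqrt 5 - 1) / 2 < Psub p c bR ->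
         forall Q, stationary p (typeI_F c bR (N:=2)) Q ->
         aeds_len p (typeI_E c bR pi) Q < avg_len p c)
    & (forall w : R, w ^+ 3 - w ^+ 2 + 2 * w - 1 = 0 -> w < Psub p c bR ->
         forall Q, stationary p (typeII_F c bR) Q ->
         aeds_len p (typeII_E c bR) Q < avg_len p c)].
Proof.
move=> S_gt1 p_gt0 sum_p huff half_le_P.
have c_gt0 : forall s, (0 < size (c s))%N by case: huff => [[_ ?] _].
have P_gt0 : 0 < Psub p c bR by move: half_le_P; lra.
have P_lt1 := Psub_lt1 p c bR (ltnW S_gt1) p_gt0 sum_p huff.
split.
- move=> [|[|n]] pi // _ pi_ok; split.
    by exists (fun x : 'I_n.+2 => qI p c bR n.+1 x); exact: typeI_stationary_qI.
  by move=> Q st; rewrite typeI_aeds_len // min_subr_pos0.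
- split; first by exists (fun x : 'I_5 => qII p c bR x); exact: typeII_stationary_qII.
  by move=> Q st; rewrite typeII_aeds_len // min_subr_pos0.
- move=> pi pi_ok golden_lt Q st; rewrite typeI_aeds_len //.
  by rewrite gtrBl gainI2_gt0.
- move=> w w_root lt_wP Q st; rewrite typeII_aeds_len //.
  by rewrite gtrBl (gainII_gt0 w _ P_gt0 P_lt1 w_root).
Qed.
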